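(* Let $m>0$ and $a_1,a_2\in(-\infty,4m^2)$. For every $b_2\in\mathbb{R}$ there exist $b_0,b_1\in\mathbb{R}$ such that the equation $$\gamma(a_1-\gamma)(a_2-\gamma)J(\gamma)=b_0+b_1\gamma+b_2\gamma^2$$ admits three distinct real solutions $\gamma_0,\gamma_1,\gamma_2\in(-\infty,4m^2)$.
   Context: $\rho(M)=\frac{1}{16\pi^2}\sqrt{1-\frac{4m^2}{M}}\frac1M$ for $M\ge4m^2$, and $J(\gamma)=\int_{4m^2}^\infty\frac{\rho(M)}{M-\gamma}dM$ for $\gamma<4m^2$. *)

From Stdlib Require Import Reals.
From Coquelicot Require Import Coquelicot.
Open Scope R_scope.

Definition rho (m M : R) : R :=
  / (16 * PI ^ 2) * sqrt (1 - 4 * m ^ 2 / M) * / M.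

Definition J (m gamma : R) : R :=
  RInt_gen (fun M => rho m M / (M - gamma))
           (at_point (4 * m ^ 2)) (Rbar_locally p_infty).

From Stdlib Require Import Reals Lra.
From Coquelicot Require Import Coquelicot.
Open Scope R_scope.

(* With [c = 4 m^2], the substitution [M = c / (1 - v^2)] gives
   [J(g) = K * \int_0^1 2 v^2 / (c - g (1 - v^2)) dv] with [K = 1 / (16 pi^2)], so
   [H(g) = g (a1 - g) (a2 - g) J(g)] is continuous on [(-oo, c)].  Three points solve the
   equation for some [b0, b1] iff the second divided difference of [H] at them equals [b2].
   On the connected set of ordered triples below [c] this divided difference is continuous and
   unbounded in both directions: it tends to [-oo] along [(-T, 0, c/2)] because [J(-T)] is of
   order [ln T / T], and to [+oo] along triples accumulating at [c] because [J] has infinite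
   slope there.  The intermediate value theorem then produces a triple where it equals [b2]. *)

Lemma Rdiv_le_cross (a b d e : R) : 0 < d -> 0 < e -> a * e <= b * d -> a / d <= b / e.
Proof.
  intros Hd He H.
  replace (a / d) with (b / e + (a * e - b * d) * / (d * e)) by (field; lra).
  assert (0 < / (d * e)) by (apply Rinv_0_lt_compat; nra).
  nra.
Qed.

Lemma continuity_pt_lipschitz (f : R -> R) (x0 delta L : R) : 0 < delta ->
  (forall x, Rabs (x - x0) < delta -> Rabs (f x - f x0) <= L * Rabs (x - x0)) ->
  continuity_pt f x0.
Proof.
  intros Hdelta Hf eps Heps.
  set (L' := Rabs L + 1).
  assert (HL' : 0 < L') by (unfold L'; pose proof (Rabs_pos L); lra).
  exists (Rmin delta (eps / L')); split.
  { apply Rmin_glb_lt; [lra | apply Rdiv_lt_0_compat; lra]. }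
  intros x [_ Hx]; simpl in *; unfold R_dist in *.
  assert (H1 : Rabs (x - x0) < delta) by (eapply Rlt_le_trans; [exact Hx | apply Rmin_l]).
  assert (H2 : Rabs (x - x0) * L' < eps).
  { replace eps with (eps / L' * L') by (field; lra).
    apply Rmult_lt_compat_r; [lra|].
    eapply Rlt_le_trans; [exact Hx | apply Rmin_r]. }
  pose proof (Hf x H1); pose proof (Rle_abs L); pose proof (Rabs_pos (x - x0)).
  unfold L' in H2; nra.
Qed.

Lemma ex_RInt_continuous_on (f : R -> R) (a b : R) : a <= b ->
  (forall x, a <= x <= b -> continuous f x) -> ex_RInt f a b.
Proof.
  intros Hab Hf; apply (ex_RInt_continuous (V := R_CompleteNormedModule)).
  intros x Hx; rewrite Rmin_left, Rmax_right in Hx by lra; apply Hf, Hx.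
Qed.

Lemma RInt_le_subinterval (f : R -> R) (a b u w : R) :
  (forall x, a <= x <= b -> continuous f x) -> (forall x, a <= x <= b -> 0 <= f x) ->
  a <= u -> u <= w -> w <= b -> RInt f u w <= RInt f a b.
Proof.
  intros Hc Hp Hau Huw Hwb.
  assert (Ex : forall s t, a <= s -> s <= t -> t <= b -> ex_RInt f s t)
    by (intros; apply ex_RInt_continuous_on; [lra | intros; apply Hc; lra]).
  rewrite <- (RInt_Chasles (V := R_CompleteNormedModule) f a u b) by (apply Ex; lra).
  rewrite <- (RInt_Chasles (V := R_CompleteNormedModule) f u w b) by (apply Ex; lra).
  assert (0 <= RInt f a u) by (apply RInt_ge_0; [lra | apply Ex; lra | intros; apply Hp; lra]).
  assert (0 <= RInt f w b) by (apply RInt_ge_0; [lra | apply Ex; lra | intros; apply Hp; lra]).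
  unfold plus; simpl; lra.
Qed.

Lemma is_RInt_gen_p_infty_bound (f : R -> R) (a l C : R) :
  (forall b, a < b -> ex_RInt f a b) ->
  (forall b, a < b -> Rabs (RInt f a b - l) <= C / b) ->
  is_RInt_gen f (at_point a) (Rbar_locally p_infty) l.
Proof.
  intros Hex Hbound.
  apply (filterlimi_lim_ext_loc (fun ab => RInt f (fst ab) (snd ab))).
  - apply (Filter_prod _ _ _ (fun x => x = a) (fun b => a < b)); [reflexivity | exists a; auto |].
    intros x b -> Hb; apply (RInt_correct (V := R_CompleteNormedModule)), Hex, Hb.
  - apply filterlim_locally; intros eps.
    set (b0 := Rmax a (Rmax 0 (Rabs C / eps))).
    apply (Filter_prod _ _ _ (fun x => x = a) (fun b => b0 < b)); [reflexivity | exists b0; auto |].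
    intros x b -> Hb; simpl.
    pose proof (cond_pos eps); pose proof (Rle_abs C).
    assert (Hab : a < b) by (eapply Rle_lt_trans; [apply Rmax_l | exact Hb]).
    assert (Hb0 : 0 < b)
      by (eapply Rle_lt_trans; [eapply Rle_trans; [apply Rmax_l | apply Rmax_r] | exact Hb]).
    assert (HbC : Rabs C / eps < b)
      by (eapply Rle_lt_trans; [eapply Rle_trans; [apply Rmax_r | apply Rmax_r] | exact Hb]).
    change (Rabs (RInt f a b - l) < eps).
    eapply Rle_lt_trans; [apply Hbound, Hab |].
    apply Rlt_div_l; [lra |].
    apply Rlt_div_l in HbC; lra.
Qed.

Definition divdiff2 (f : R -> R) (x y z : R) : R :=
  ((f z - f y) / (z - y) - (f y - f x) / (y - x)) / (z - x).

Lemma quadratic_interpolation (f : R -> R) (x y z : R) : x < y -> y < z ->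
  exists b0 b1 : R, let b2 := divdiff2 f x y z in
    f x = b0 + b1 * x + b2 * x ^ 2 /\
    f y = b0 + b1 * y + b2 * y ^ 2 /\
    f z = b0 + b1 * z + b2 * z ^ 2.
Proof.
  intros Hxy Hyz.
  (* Newton form: [f g = f x + s (g - x) + b2 (g - x) (g - y)]. *)
  set (s := (f y - f x) / (y - x)).
  exists (f x - s * x + divdiff2 f x y z * x * y), (s - divdiff2 f x y z * (x + y)).
  unfold divdiff2, s; repeat split; field; lra.
Qed.

Lemma lerp_lt (a0 b0 a1 b1 t : R) : 0 <= t <= 1 -> a0 < b0 -> a1 < b1 ->
  a0 + t * (a1 - a0) < b0 + t * (b1 - b0).
Proof.
  intros Ht H0 H1.
  assert (0 <= t * (b1 - a1) /\ 0 <= (1 - t) * (b0 - a0)) by (split; apply Rmult_le_pos; lra).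
  destruct (Rle_lt_dec (b0 - a0) (b1 - a1)); nra.
Qed.

Lemma continuity_pt_lerp (a b t : R) : continuity_pt (fun s => a + s * (b - a)) t.
Proof.
  apply continuity_pt_plus; [apply continuity_pt_const; intros ? ?; reflexivity|].
  apply continuity_pt_mult; [apply continuity_pt_id |].
  apply continuity_pt_const; intros ? ?; reflexivity.
Qed.

(* The ordered triples below [c] form a convex set, on which [divdiff2 f] is continuous. *)
Lemma divdiff2_IVT (f : R -> R) (c v x0 y0 z0 x1 y1 z1 : R) :
  (forall g, g < c -> continuity_pt f g) ->
  x0 < y0 -> y0 < z0 -> z0 < c -> x1 < y1 -> y1 < z1 -> z1 < c ->
  divdiff2 f x0 y0 z0 < v < divdiff2 f x1 y1 z1 ->
  exists x y z, x < y /\ y < z /\ z < c /\ divdiff2 f x y z = v.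
Proof.
  intros Hf H1 H2 H3 H4 H5 H6 Hv.
  set (path := fun a0 a1 t => a0 + t * (a1 - a0)).
  assert (Hord : forall t, 0 <= t <= 1 ->
    path x0 x1 t < path y0 y1 t /\ path y0 y1 t < path z0 z1 t /\ path z0 z1 t < c).
  { intros t Ht; unfold path; repeat split; try (apply lerp_lt; lra).
    replace c with (c + t * (c - c)) by ring; apply lerp_lt; lra. }
  set (phi := fun t => divdiff2 f (path x0 x1 t) (path y0 y1 t) (path z0 z1 t) - v).
  destruct (Ranalysis5.IVT_interv phi 0 1) as [t [Ht Hphi]].
  - intros t Ht; destruct (Hord t Ht) as [o1 [o2 o3]].
    assert (Hcomp : forall a0 a1, path a0 a1 t < c ->
                    continuity_pt (fun s => f (path a0 a1 s)) t).
    { intros a0 a1 Ha; apply continuity_pt_comp; [apply continuity_pt_lerp | apply Hf, Ha]. }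
    unfold phi, divdiff2.
    repeat first
      [ apply continuity_pt_minus | apply continuity_pt_const; intros ? ?; reflexivity
      | apply continuity_pt_div; [ | | lra] | apply continuity_pt_lerp | apply Hcomp; lra ].
  - lra.
  - unfold phi, path; rewrite !Rmult_0_l, !Rplus_0_r; lra.
  - unfold phi, path; rewrite !Rmult_1_l.
    replace (x0 + (x1 - x0)) with x1 by ring; replace (y0 + (y1 - y0)) with y1 by ring;
    replace (z0 + (z1 - z0)) with z1 by ring; lra.
  - destruct (Hord t Ht) as [o1 [o2 o3]].
    exists (path x0 x1 t), (path y0 y1 t), (path z0 z1 t); unfold phi in Hphi; repeat split; lra.
Qed.

Definition J_kernel (c g v : R) : R := 2 * v ^ 2 / (c - g * (1 - v ^ 2)).

Definition J_reduced (c g : R) : R := RInt (J_kernel c g) 0 1.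

Section Reduced.

Variable c : R.
Hypothesis Hc : 0 < c.

Lemma J_kernel_den (g g0 v : R) : g <= g0 -> g0 < c -> 0 <= v <= 1 ->
  0 < Rmin c (c - g0) /\ Rmin c (c - g0) <= c - g * (1 - v ^ 2).
Proof.
  intros Hg Hg0 Hv; assert (0 <= v ^ 2 <= 1) by (split; nra).
  unfold Rmin; destruct (Rle_dec c (c - g0)); destruct (Rle_dec 0 g); split; nra.
Qed.

Lemma J_kernel_continuous (g v : R) : g < c -> 0 <= v <= 1 -> continuous (J_kernel c g) v.
Proof.
  intros Hg Hv; destruct (J_kernel_den g g v) as [H1 H2]; try lra.
  apply (ex_derive_continuous (V := R_NormedModule)); unfold J_kernel; auto_derive; lra.
Qed.

Lemma ex_RInt_J_kernel (g a b : R) : g < c -> 0 <= a -> a <= b -> b <= 1 ->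
  ex_RInt (J_kernel c g) a b.
Proof.
  intros; apply ex_RInt_continuous_on; [lra | intros; apply J_kernel_continuous; lra].
Qed.

Lemma J_kernel_bounds (g v : R) : g < c -> 0 <= v <= 1 ->
  0 <= J_kernel c g v <= 2 / Rmin c (c - g).
Proof.
  intros Hg Hv; destruct (J_kernel_den g g v) as [H1 H2]; try lra.
  unfold J_kernel; split.
  - apply Rdiv_le_0_compat; nra.
  - assert (v ^ 2 <= 1) by nra.
    apply Rdiv_le_cross; nra.
Qed.

Lemma J_reduced_nonneg (g : R) : g < c -> 0 <= J_reduced c g.
Proof.
  intros Hg; apply RInt_ge_0; [lra | apply ex_RInt_J_kernel; lra |].
  intros v Hv; apply J_kernel_bounds; lra.
Qed.

Lemma J_reduced_le (g : R) : 0 <= g < c -> J_reduced c g <= 2 / c.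
Proof.
  intros Hg; unfold J_reduced.
  apply Rle_trans with (RInt (fun _ => 2 / c) 0 1).
  - apply RInt_le; [lra | apply ex_RInt_J_kernel; lra | apply ex_RInt_const |].
    intros v Hv; destruct (J_kernel_den g g v) as [H1 H2]; try lra.
    assert (0 <= (c - g) * (1 - v ^ 2)) by (apply Rmult_le_pos; nra).
    unfold J_kernel; apply Rdiv_le_cross; nra.
  - rewrite RInt_const; unfold scal; simpl; unfold mult; simpl; lra.
Qed.

Lemma J_reduced_lipschitz (g0 g1 g2 : R) : g0 < c -> g1 <= g0 -> g2 <= g0 ->
  Rabs (J_reduced c g1 - J_reduced c g2) <= 2 / Rmin c (c - g0) ^ 2 * Rabs (g1 - g2).
Proof.
  intros Hg0 H1 H2; set (mu := Rmin c (c - g0)).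
  unfold J_reduced.
  rewrite <- (RInt_minus (V := R_CompleteNormedModule)) by (apply ex_RInt_J_kernel; lra).
  replace (2 / mu ^ 2 * Rabs (g1 - g2)) with ((1 - 0) * (2 / mu ^ 2 * Rabs (g1 - g2))) by ring.
  apply abs_RInt_le_const; [lra | apply (ex_RInt_minus (V := R_NormedModule));
    apply ex_RInt_J_kernel; lra |].
  intros v Hv.
  destruct (J_kernel_den g1 g0 v) as [Hmu D1]; try lra.
  destruct (J_kernel_den g2 g0 v) as [_ D2]; try lra.
  fold mu in Hmu, D1, D2.
  change (Rabs (J_kernel c g1 v - J_kernel c g2 v) <= 2 / mu ^ 2 * Rabs (g1 - g2)).
  replace (J_kernel c g1 v - J_kernel c g2 v)
    with (2 * v ^ 2 * (1 - v ^ 2) * / ((c - g1 * (1 - v ^ 2)) * (c - g2 * (1 - v ^ 2))) * (g1 - g2))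
    by (unfold J_kernel; field; split; lra).
  set (d1 := c - g1 * (1 - v ^ 2)) in *; set (d2 := c - g2 * (1 - v ^ 2)) in *.
  rewrite Rabs_mult.
  apply Rmult_le_compat_r; [apply Rabs_pos |].
  assert (Hv2 : 0 <= v ^ 2 <= 1) by (split; nra).
  assert (0 <= 2 * v ^ 2 * (1 - v ^ 2) <= 2) by (split; nra).
  assert (/ (d1 * d2) <= / mu ^ 2) by (apply Rinv_le_contravar; nra).
  assert (0 < / (d1 * d2)) by (apply Rinv_0_lt_compat; nra).
  rewrite Rabs_pos_eq by nra.
  unfold Rdiv; nra.
Qed.

Lemma J_reduced_continuity (g : R) : g < c -> continuity_pt (J_reduced c) g.
Proof.
  intros Hg; apply (continuity_pt_lipschitz _ g ((c - g) / 2) (2 / Rmin c (c - (g + c) / 2) ^ 2));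
    [lra |].
  intros x Hx; apply Rabs_def2 in Hx.
  apply J_reduced_lipschitz; lra.
Qed.

Lemma J_kernel_monotone (g1 g2 v : R) : g1 <= g2 -> g2 < c -> 0 <= v <= 1 ->
  J_kernel c g1 v <= J_kernel c g2 v.
Proof.
  intros H12 H2 Hv.
  destruct (J_kernel_den g1 g2 v) as [Hmu D1]; try lra.
  destruct (J_kernel_den g2 g2 v) as [_ D2]; try lra.
  assert (0 <= v ^ 2 * (g2 - g1) * (1 - v ^ 2))
    by (apply Rmult_le_pos; [apply Rmult_le_pos |]; nra).
  unfold J_kernel; apply Rdiv_le_cross; lra.
Qed.

Lemma J_kernel_gap (d v : R) : 0 < d <= 1 / 4 -> d / 4 <= v ^ 2 <= d ->
  1 / (4 * (c + 2) ^ 2) <= J_kernel c (c - d) v - J_kernel c (c - 2 * d) v.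
Proof.
  intros Hd Hv; unfold J_kernel.
  replace (c - (c - d) * (1 - v ^ 2)) with (c * v ^ 2 + d * (1 - v ^ 2)) by ring.
  replace (c - (c - 2 * d) * (1 - v ^ 2)) with (c * v ^ 2 + 2 * d * (1 - v ^ 2)) by ring.
  assert (P1 : 0 < c * v ^ 2 + d * (1 - v ^ 2)) by nra.
  assert (P2 : 0 < c * v ^ 2 + 2 * d * (1 - v ^ 2)) by nra.
  replace (2 * v ^ 2 / (c * v ^ 2 + d * (1 - v ^ 2))
           - 2 * v ^ 2 / (c * v ^ 2 + 2 * d * (1 - v ^ 2)))
    with (2 * v ^ 2 * d * (1 - v ^ 2)
          / ((c * v ^ 2 + d * (1 - v ^ 2)) * (c * v ^ 2 + 2 * d * (1 - v ^ 2))))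
    by (field; lra).
  apply Rdiv_le_cross; [nra | nra |].
  assert (c * v ^ 2 + d * (1 - v ^ 2) <= (c + 1) * d) by nra.
  assert (c * v ^ 2 + 2 * d * (1 - v ^ 2) <= (c + 2) * d) by nra.
  assert ((c * v ^ 2 + d * (1 - v ^ 2)) * (c * v ^ 2 + 2 * d * (1 - v ^ 2))
          <= (c + 1) * (c + 2) * (d * d))
    by (apply Rle_trans with (((c + 1) * d) * ((c + 2) * d)); [apply Rmult_le_compat |]; nra).
  assert (2 * v ^ 2 * d * (1 - v ^ 2) >= d * d / 4) by nra.
  assert (0 < d * d) by nra.
  nra.
Qed.

Lemma J_reduced_gap (s : R) : 0 < s <= 1 / 2 ->
  s / (8 * (c + 2) ^ 2) <= J_reduced c (c - s ^ 2) - J_reduced c (c - 2 * s ^ 2).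
Proof.
  intros Hs; set (d := s ^ 2).
  assert (Hd : 0 < d <= 1 / 4) by (unfold d; split; nra).
  set (f := fun v => J_kernel c (c - d) v - J_kernel c (c - 2 * d) v).
  assert (Hf : forall v, 0 <= v <= 1 -> continuous f v).
  { intros v Hv; apply (continuous_minus (V := R_NormedModule));
      apply J_kernel_continuous; lra. }
  assert (Hfp : forall v, 0 <= v <= 1 -> 0 <= f v)
    by (intros v Hv; pose proof (J_kernel_monotone (c - 2 * d) (c - d) v); unfold f; lra).
  unfold J_reduced.
  rewrite <- (RInt_minus (V := R_CompleteNormedModule)) by (apply ex_RInt_J_kernel; lra).
  change (RInt (fun x => minus (J_kernel c (c - d) x) (J_kernel c (c - 2 * d) x)) 0 1)
    with (RInt f 0 1).
  apply Rle_trans with (RInt f (s / 2) s); [| apply RInt_le_subinterval; auto; lra].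
  apply Rle_trans with (RInt (fun _ => 1 / (4 * (c + 2) ^ 2)) (s / 2) s).
  { rewrite RInt_const; unfold scal; simpl; unfold mult; simpl; apply Req_le; field; lra. }
  apply RInt_le; [lra | apply ex_RInt_const | apply ex_RInt_continuous_on; [lra|];
    intros; apply Hf; lra |].
  intros v Hv; apply J_kernel_gap; [lra | unfold d; split; nra].
Qed.

(* On [[1/2, 1]] the kernel at [-T] dominates [1 / (2 (c + 2 T (1 - v)))], which has an
   explicit logarithmic primitive. *)
Lemma J_reduced_ln_lower (T : R) : 0 < T -> (ln (c + T) - ln c) / (4 * T) <= J_reduced c (- T).
Proof.
  intros HT; unfold J_reduced.
  apply Rle_trans with (RInt (J_kernel c (- T)) (1 / 2) 1).
  2: { apply RInt_le_subinterval; try lra;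
       intros; [apply J_kernel_continuous | apply J_kernel_bounds]; lra. }
  set (df := fun v => 1 / (2 * (c + 2 * T * (1 - v)))).
  set (F := fun v => - ln (c + 2 * T * (1 - v)) / (4 * T)).
  assert (Hint : is_RInt df (1 / 2) 1 (minus (F 1) (F (1 / 2)))).
  { apply (is_RInt_derive (V := R_CompleteNormedModule)); intros x Hx;
      rewrite Rmin_left, Rmax_right in Hx by lra.
    - unfold F, df; auto_derive; [nra | field; split; nra].
    - apply (ex_derive_continuous (V := R_NormedModule)); unfold df; auto_derive; nra. }
  replace ((ln (c + T) - ln c) / (4 * T)) with (minus (F 1) (F (1 / 2))).
  2: { unfold F, minus, plus, opp; simpl.
       replace (c + 2 * T * (1 - 1)) with c by ring.
       replace (c + 2 * T * (1 - 1 / 2)) with (c + T) by field; field; lra. }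
  rewrite <- (is_RInt_unique _ _ _ _ Hint).
  apply RInt_le; [lra | eexists; exact Hint | apply ex_RInt_J_kernel; lra |].
  intros v Hv; unfold df, J_kernel.
  assert (0 <= T * (1 - v)) by (apply Rmult_le_pos; lra).
  assert (T * (1 - v ^ 2) <= 2 * T * (1 - v)) by nra.
  assert (0 <= T * (1 - v ^ 2)) by (apply Rmult_le_pos; nra).
  assert (1 <= 4 * v ^ 2) by nra.
  apply Rdiv_le_cross; nra.
Qed.

End Reduced.

Definition J_integrand (K c g M : R) : R := K * sqrt (1 - c / M) * / M / (M - g).

Section Integrand.

Variables K c g : R.
Hypothesis Hc : 0 < c.
Hypothesis Hg : g < c.

Lemma J_integrand_continuous (M : R) : c <= M -> continuous (J_integrand K c g) M.
Proof.
  intros HM; apply continuity_pt_filterlim; unfold J_integrand.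
  assert (c / M <= 1) by (apply (Rdiv_le_1 c M); lra).
  apply continuity_pt_div; [| | lra].
  - apply continuity_pt_mult; [apply continuity_pt_mult |].
    + apply continuity_pt_const; intros ? ?; reflexivity.
    + apply (continuity_pt_comp (fun M => 1 - c / M) sqrt).
      * apply continuity_pt_minus; [apply continuity_pt_const; intros ? ?; reflexivity |].
        apply continuity_pt_div; [apply continuity_pt_const; intros ? ?; reflexivity
                                 | apply continuity_pt_id | lra].
      * apply continuity_pt_sqrt; lra.
    + apply continuity_pt_inv; [apply continuity_pt_id | lra].
  - apply continuity_pt_minus; [apply continuity_pt_id |].
    apply continuity_pt_const; intros ? ?; reflexivity.
Qed.

Lemma ex_RInt_J_integrand (b : R) : c <= b -> ex_RInt (J_integrand K c g) c b.
Proof.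
  intros; apply ex_RInt_continuous_on; [lra | intros; apply J_integrand_continuous; lra].
Qed.

Lemma RInt_J_integrand_subst (w : R) : 0 <= w < 1 ->
  RInt (J_integrand K c g) c (c / (1 - w ^ 2)) = K * RInt (J_kernel c g) 0 w.
Proof.
  intros Hw.
  rewrite <- (RInt_scal (V := R_CompleteNormedModule)) by (apply ex_RInt_J_kernel; lra).
  replace c with (c / (1 - 0 ^ 2)) at 2 by (field; lra).
  rewrite <- (RInt_comp (V := R_CompleteNormedModule) (J_integrand K c g)
                (fun v => c / (1 - v ^ 2)) (fun v => 2 * c * v / (1 - v ^ 2) ^ 2)).
  - apply RInt_ext; intros v Hv; rewrite Rmin_left, Rmax_right in Hv by lra.
    assert (Hv1 : 0 < 1 - v ^ 2) by nra.
    destruct (J_kernel_den c Hc g g v) as [Hmu Hden]; try lra.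
    change (scal ?a ?b) with (a * b); unfold J_integrand, J_kernel.
    (* [RInt_ext] states the equation in the normed-module carrier, which [field] ignores. *)
    match goal with |- ?l = ?r => change (@eq R l r) end.
    replace (1 - c / (c / (1 - v ^ 2))) with (v ^ 2) by (field; lra).
    rewrite <- (Rsqr_pow2 v), sqrt_Rsqr, Rsqr_pow2 by lra.
    replace (c / (1 - v ^ 2) - g) with ((c - g * (1 - v ^ 2)) / (1 - v ^ 2)) by (field; lra).
    field; repeat split; lra.
  - intros v Hv; rewrite Rmin_left, Rmax_right in Hv by lra.
    apply J_integrand_continuous.
    assert (0 < 1 - v ^ 2 <= 1) by (split; nra).
    apply Rle_div_r; nra.
  - intros v Hv; rewrite Rmin_left, Rmax_right in Hv by lra.
    assert (Hv1 : 0 < 1 - v ^ 2) by nra.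
    split; [auto_derive; [nra | field; lra] |].
    apply (ex_derive_continuous (V := R_NormedModule)); auto_derive; nra.
Qed.

(* Writing [b = c / (1 - w^2)], the tail is [K \int_w^1 J_kernel] and [1 - w <= 1 - w^2 = c / b]. *)
Lemma J_integrand_tail (b : R) : 0 <= K -> c < b ->
  Rabs (RInt (J_integrand K c g) c b - K * J_reduced c g)
    <= K * (2 / Rmin c (c - g)) * c / b.
Proof.
  intros HK Hb.
  assert (Hcb : 0 < c / b < 1) by (split; [apply Rdiv_lt_0_compat | apply (Rdiv_lt_1 c b)]; lra).
  set (w := sqrt (1 - c / b)).
  assert (Hw2 : w ^ 2 = 1 - c / b) by (unfold w; rewrite <- Rsqr_pow2; apply Rsqr_sqrt; lra).
  assert (Hw : 0 <= w < 1).
  { split; [apply sqrt_pos |].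
    assert (H : sqrt (1 - c / b) < sqrt 1) by (apply sqrt_lt_1; lra).
    rewrite sqrt_1 in H; exact H. }
  assert (Hw1 : 1 - w <= c / b) by nra.
  replace b with (c / (1 - w ^ 2)) at 1 by (rewrite Hw2; field; lra).
  rewrite RInt_J_integrand_subst by lra; unfold J_reduced.
  rewrite <- (RInt_Chasles (V := R_CompleteNormedModule) (J_kernel c g) 0 w 1)
    by (apply ex_RInt_J_kernel; lra).
  unfold plus; simpl.
  replace (K * RInt (J_kernel c g) 0 w - K * (RInt (J_kernel c g) 0 w + RInt (J_kernel c g) w 1))
    with (- (K * RInt (J_kernel c g) w 1)) by ring.
  rewrite Rabs_Ropp, Rabs_mult, (Rabs_pos_eq K) by lra.
  assert (Hmu : 0 < 2 / Rmin c (c - g))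
    by (apply Rdiv_lt_0_compat; [lra | apply (J_kernel_den c Hc g g 0); lra]).
  assert (Rabs (RInt (J_kernel c g) w 1) <= (1 - w) * (2 / Rmin c (c - g))).
  { apply abs_RInt_le_const; [lra | apply ex_RInt_J_kernel; lra |].
    intros v Hv; destruct (J_kernel_bounds c Hc g v) as [H1 H2]; try lra.
    rewrite Rabs_pos_eq; lra. }
  replace (K * (2 / Rmin c (c - g)) * c / b) with (K * (c / b * (2 / Rmin c (c - g))))
    by (unfold Rdiv; ring).
  apply Rmult_le_compat_l; [lra |].
  eapply Rle_trans; [exact H | apply Rmult_le_compat_r; lra].
Qed.

End Integrand.

Lemma J_eq_reduced (m g : R) : 0 < m -> g < 4 * m ^ 2 ->
  J m g = / (16 * PI ^ 2) * J_reduced (4 * m ^ 2) g.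
Proof.
  intros Hm Hg.
  assert (Hc : 0 < 4 * m ^ 2) by nra.
  assert (HK : 0 < / (16 * PI ^ 2)) by (apply Rinv_0_lt_compat; pose proof PI_RGT_0; nra).
  apply is_RInt_gen_unique, (is_RInt_gen_p_infty_bound _ _ _
    (/ (16 * PI ^ 2) * (2 / Rmin (4 * m ^ 2) (4 * m ^ 2 - g)) * (4 * m ^ 2))).
  - intros b Hb; apply (ex_RInt_J_integrand _ _ _ Hc Hg); lra.
  - intros b Hb; apply (J_integrand_tail _ _ _ Hc Hg); lra.
Qed.

Definition cubic (a1 a2 g : R) : R := g * (a1 - g) * (a2 - g).

Section Cubic.

Variables a1 a2 : R.

Lemma cubic_pos (g : R) : a1 < g -> a2 < g -> 0 < g -> 0 < cubic a1 a2 g.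
Proof.
  intros H1 H2 H0; unfold cubic.
  replace (g * (a1 - g) * (a2 - g)) with (g * ((g - a1) * (g - a2))) by ring.
  apply Rmult_lt_0_compat; [| apply Rmult_lt_0_compat]; lra.
Qed.

Lemma cubic_monotone (y z : R) : a1 <= y -> a2 <= y -> 0 <= y -> y <= z ->
  cubic a1 a2 y <= cubic a1 a2 z.
Proof.
  intros H1 H2 H0 Hyz; unfold cubic.
  replace (y * (a1 - y) * (a2 - y)) with (y * ((y - a1) * (y - a2))) by ring.
  replace (z * (a1 - z) * (a2 - z)) with (z * ((z - a1) * (z - a2))) by ring.
  apply Rmult_le_compat; [lra | apply Rmult_le_pos; lra | lra |].
  apply Rmult_le_compat; lra.
Qed.

End Cubic.

Definition cubic_J (K c a1 a2 g : R) : R := cubic a1 a2 g * (K * J_reduced c g).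

Section Estimates.

Variables K c a1 a2 : R.
Hypothesis HK : 0 < K.
Hypothesis Hc : 0 < c.
Hypothesis Ha1 : a1 < c.
Hypothesis Ha2 : a2 < c.

Let H := cubic_J K c a1 a2.
Let max_root := Rmax (Rmax a1 a2) 0.

Lemma max_root_bounds : a1 <= max_root /\ a2 <= max_root /\ 0 <= max_root /\ max_root < c.
Proof.
  unfold max_root; pose proof (Rmax_l (Rmax a1 a2) 0); pose proof (Rmax_r (Rmax a1 a2) 0).
  pose proof (Rmax_l a1 a2); pose proof (Rmax_r a1 a2).
  repeat split; try lra.
  apply Rmax_lub_lt; [apply Rmax_lub_lt |]; lra.
Qed.

Lemma cubic_J_continuity (g : R) : g < c -> continuity_pt H g.
Proof.
  intros Hg; unfold H, cubic_J, cubic.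
  apply continuity_pt_mult; [| apply continuity_pt_mult;
    [apply continuity_pt_const; intros ? ?; reflexivity | apply J_reduced_continuity; lra]].
  repeat first [apply continuity_pt_mult | apply continuity_pt_minus | apply continuity_pt_id
               | apply continuity_pt_const; intros ? ?; reflexivity].
Qed.

(* [J(-T)] decays only like [ln T / T], so [H(-T) = -T (a1 + T) (a2 + T) J(-T)] is of order
   [-T^2 ln T]. *)
Lemma cubic_J_neg_growth (S : R) : 0 <= S ->
  exists T, 1 <= T /\ c / 2 <= T /\ T * S <= (a1 + T) * (a2 + T) * (K * J_reduced c (- T)).
Proof.
  intros HS.
  set (L := 16 * S / K).
  set (T := c * exp L + c + 2 * (Rabs a1 + Rabs a2) + 1).
  pose proof (exp_pos L); pose proof (Rabs_pos a1); pose proof (Rabs_pos a2).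
  pose proof (Rle_abs (- a1)); pose proof (Rle_abs (- a2)); rewrite !Rabs_Ropp in *.
  assert (HL : 0 <= L) by (apply Rdiv_le_0_compat; lra).
  assert (0 < c * exp L) by (apply Rmult_lt_0_compat; lra).
  assert (HT : 1 <= T /\ c / 2 <= T /\ 2 * (Rabs a1 + Rabs a2) <= T /\ c * exp L <= c + T)
    by (unfold T; lra).
  exists T; split; [lra | split; [lra |]].
  assert (Hln : L <= ln (c + T) - ln c).
  { assert (ln (c * exp L) <= ln (c + T)) by (apply ln_le; nra).
    rewrite ln_mult, ln_exp in * by lra; lra. }
  assert (HJ : K * (L / (4 * T)) <= K * J_reduced c (- T)).
  { apply Rmult_le_compat_l; [lra |].
    eapply Rle_trans; [| apply J_reduced_ln_lower; lra].
    unfold Rdiv; apply Rmult_le_compat_r; [apply Rlt_le, Rinv_0_lt_compat |]; lra. }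
  assert (Hpoly : T / 2 * (T / 2) <= (a1 + T) * (a2 + T)) by (apply Rmult_le_compat; lra).
  replace (T * S) with (T / 2 * (T / 2) * (K * (L / (4 * T)))) by (unfold L; field; split; lra).
  apply Rmult_le_compat; try lra; apply Rmult_le_pos; try lra.
  apply Rdiv_le_0_compat; lra.
Qed.

Lemma divdiff2_cubic_J_neg_inf (N : R) :
  exists T, 0 < T /\ divdiff2 H (- T) 0 (c / 2) < N.
Proof.
  set (A := 2 * Rabs (H (c / 2)) / c).
  pose proof (Rabs_pos N); pose proof (Rabs_pos (H (c / 2))).
  assert (HA : 0 <= A) by (apply Rdiv_le_0_compat; lra).
  destruct (cubic_J_neg_growth (A + 2 * Rabs N + 1) ltac:(lra)) as (T & HT1 & HTc & Hgrow).
  exists T; split; [lra |].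
  replace (divdiff2 H (- T) 0 (c / 2))
    with ((H (c / 2) * (2 / c) - (a1 + T) * (a2 + T) * (K * J_reduced c (- T))) / (c / 2 + T))
    by (unfold divdiff2, H, cubic_J, cubic; field; lra).
  apply Rlt_div_l; [lra |].
  assert (H (c / 2) * (2 / c) <= A).
  { replace A with (Rabs (H (c / 2)) * (2 / c)) by (unfold A; field; lra).
    apply Rmult_le_compat_r; [apply Rlt_le, Rdiv_lt_0_compat; lra | apply Rle_abs]. }
  assert (A <= T * A) by nra.
  assert (Rabs N * (c / 2 + T) <= 2 * T * Rabs N) by nra.
  assert (- (Rabs N * (c / 2 + T)) <= N * (c / 2 + T))
    by (pose proof (Rle_abs (- N)); rewrite Rabs_Ropp in *; nra).
  nra.
Qed.

Lemma cubic_J_bounds (g : R) : max_root < g < c -> 0 <= H g <= cubic a1 a2 c * (K * (2 / c)).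
Proof.
  intros Hg; pose proof max_root_bounds.
  pose proof (cubic_pos a1 a2 g ltac:(lra) ltac:(lra) ltac:(lra)).
  pose proof (cubic_monotone a1 a2 g c ltac:(lra) ltac:(lra) ltac:(lra) ltac:(lra)).
  pose proof (J_reduced_nonneg c Hc g (proj2 Hg)).
  pose proof (J_reduced_le c Hc g ltac:(lra)).
  unfold H, cubic_J; split.
  - apply Rmult_le_pos; [lra | apply Rmult_le_pos; lra].
  - apply Rmult_le_compat; [lra | apply Rmult_le_pos; lra | lra | apply Rmult_le_compat_l; lra].
Qed.

Lemma cubic_J_gap (s : R) : 0 < s <= 1 / 2 -> max_root < c - 2 * s ^ 2 ->
  cubic a1 a2 (c - 2 * s ^ 2) * (K * (s / (8 * (c + 2) ^ 2)))
    <= H (c - s ^ 2) - H (c - 2 * s ^ 2).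
Proof.
  intros Hs Hr; pose proof max_root_bounds.
  assert (Hs2 : 0 < s ^ 2) by (apply pow_lt; lra).
  set (y := c - 2 * s ^ 2) in *; set (z := c - s ^ 2).
  pose proof (J_reduced_gap c Hc s Hs) as Hgap; fold y z in Hgap.
  pose proof (cubic_pos a1 a2 y ltac:(lra) ltac:(lra) ltac:(lra)).
  pose proof (cubic_monotone a1 a2 y z ltac:(lra) ltac:(lra) ltac:(lra) ltac:(unfold y, z; lra)).
  pose proof (J_reduced_nonneg c Hc z ltac:(unfold z; lra)).
  unfold H, cubic_J.
  replace (cubic a1 a2 z * (K * J_reduced c z) - cubic a1 a2 y * (K * J_reduced c y))
    with (cubic a1 a2 y * (K * (J_reduced c z - J_reduced c y))
          + (cubic a1 a2 z - cubic a1 a2 y) * (K * J_reduced c z)) by ring.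
  assert (0 <= (cubic a1 a2 z - cubic a1 a2 y) * (K * J_reduced c z))
    by (apply Rmult_le_pos; [lra | apply Rmult_le_pos; lra]).
  enough (cubic a1 a2 y * (K * (s / (8 * (c + 2) ^ 2)))
          <= cubic a1 a2 y * (K * (J_reduced c z - J_reduced c y))) by lra.
  apply Rmult_le_compat_l; [lra | apply Rmult_le_compat_l; lra].
Qed.

Let base := (max_root + c) / 2.
Let gap_rate := cubic a1 a2 base * (K / (8 * (c + 2) ^ 2)).
Let slope_cap := cubic a1 a2 c * (K * (2 / c)) / ((c - max_root) / 4).

Lemma near_c_constants : 0 < gap_rate /\ 0 <= slope_cap.
Proof.
  destruct max_root_bounds as (Hr1 & Hr2 & Hr0 & Hrc).
  split.
  - apply Rmult_lt_0_compat; [apply cubic_pos; unfold base; lra |].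
    apply Rdiv_lt_0_compat; [lra | apply Rmult_lt_0_compat; [lra | apply pow_lt; lra]].
  - pose proof (cubic_J_bounds base ltac:(unfold base; lra)).
    apply Rdiv_le_0_compat; lra.
Qed.

(* [J] has infinite slope at [c]: by [J_reduced_gap], its increment over the step [s^2] below [c]
   is of order [s]. *)
Lemma divdiff2_cubic_J_near_c_bound (s : R) : 0 < s <= 1 / 2 -> s <= (c - max_root) / 8 ->
  gap_rate / s - slope_cap <= divdiff2 H base (c - 2 * s ^ 2) (c - s ^ 2) * (c - s ^ 2 - base).
Proof.
  intros Hs Hs8; destruct max_root_bounds as (Hr1 & Hr2 & Hr0 & Hrc).
  assert (Hc2 : 0 < 8 * (c + 2) ^ 2) by (apply Rmult_lt_0_compat; [lra | apply pow_lt; lra]).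
  assert (Hs2 : 0 < s ^ 2 <= s / 2) by (split; [apply pow_lt |]; nra).
  set (x := base) in *; set (y := c - 2 * s ^ 2); set (z := c - s ^ 2).
  assert (Hxy : (c - max_root) / 4 <= y - x) by (unfold x, base, y; lra).
  assert (Hslope_zy : gap_rate / s <= (H z - H y) / (z - y)).
  { replace (z - y) with (s ^ 2) by (unfold y, z; ring).
    apply (Rle_div_r (gap_rate / s) (H z - H y) (s ^ 2)); [lra |].
    pose proof (cubic_J_gap s Hs ltac:(unfold y, x, base in *; lra)) as Hgap; fold y z in Hgap.
    pose proof (cubic_monotone a1 a2 x y ltac:(unfold x, base; lra) ltac:(unfold x, base; lra)
                  ltac:(unfold x, base; lra) ltac:(lra)).
    replace (gap_rate / s * s ^ 2) with (cubic a1 a2 x * (K * (s / (8 * (c + 2) ^ 2))))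
      by (unfold gap_rate; field; repeat split; lra).
    eapply Rle_trans; [| exact Hgap].
    apply Rmult_le_compat_r; [| lra].
    apply Rmult_le_pos; [lra | apply Rdiv_le_0_compat; lra]. }
  assert (Hslope_yx : (H y - H x) / (y - x) <= slope_cap).
  { pose proof (cubic_J_bounds x ltac:(unfold x, base; lra)).
    pose proof (cubic_J_bounds y ltac:(split; [unfold x, base in Hxy; lra | unfold y; lra])).
    unfold slope_cap; apply Rdiv_le_cross; [lra | lra |].
    apply Rle_trans with (cubic a1 a2 c * (K * (2 / c)) * ((c - max_root) / 4));
      [apply Rmult_le_compat_r | apply Rmult_le_compat_l]; lra. }
  replace (divdiff2 H x y z * (z - x)) with ((H z - H y) / (z - y) - (H y - H x) / (y - x))
    by (unfold divdiff2, x, base, y, z in *; field; lra).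
  lra.
Qed.

Lemma divdiff2_cubic_J_near_c (N : R) :
  exists x y z, x < y /\ y < z /\ z < c /\ N < divdiff2 H x y z.
Proof.
  destruct max_root_bounds as (Hr1 & Hr2 & Hr0 & Hrc).
  destruct near_c_constants as [Hrate Hcap].
  pose proof (Rabs_pos N); pose proof (Rle_abs N).
  set (M := slope_cap + c * (Rabs N + 1) + 1).
  set (s := Rmin (Rmin (1 / 2) ((c - max_root) / 8)) (gap_rate / M)).
  assert (Hs : 0 < s /\ s <= 1 / 2 /\ s <= (c - max_root) / 8 /\ s <= gap_rate / M).
  { unfold s; repeat split.
    - repeat apply Rmin_glb_lt; try lra; apply Rdiv_lt_0_compat; unfold M; nra.
    - eapply Rle_trans; apply Rmin_l.
    - eapply Rle_trans; [apply Rmin_l | apply Rmin_r].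
    - apply Rmin_r. }
  destruct Hs as (Hs0 & Hs1 & Hs8 & HsM).
  assert (Hs2 : 0 < s ^ 2 <= s / 2) by (split; [apply pow_lt |]; nra).
  assert (HM : M <= gap_rate / s).
  { apply (Rle_div_r _ gap_rate s); [lra |].
    apply (Rle_div_r s gap_rate M) in HsM; unfold M in *; nra. }
  pose proof (divdiff2_cubic_J_near_c_bound s (conj Hs0 Hs1) Hs8) as Hbound.
  exists base, (c - 2 * s ^ 2), (c - s ^ 2).
  assert (Hzx : 0 < c - s ^ 2 - base <= c) by (unfold base; lra).
  repeat split; try (unfold base; lra).
  apply (Rmult_lt_reg_r (c - s ^ 2 - base)); [lra |].
  assert (N * (c - s ^ 2 - base) <= Rabs N * c) by
    (apply Rle_trans with (Rabs N * (c - s ^ 2 - base));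
     [apply Rmult_le_compat_r | apply Rmult_le_compat_l]; lra).
  unfold M in HM; lra.
Qed.

End Estimates.

Theorem proposition4p9 (m a1 a2 : R) :
  0 < m -> a1 < 4 * m ^ 2 -> a2 < 4 * m ^ 2 ->
  forall b2 : R, exists b0 b1 : R, exists g0 g1 g2 : R,
    g0 <> g1 /\ g0 <> g2 /\ g1 <> g2 /\
    g0 < 4 * m ^ 2 /\ g1 < 4 * m ^ 2 /\ g2 < 4 * m ^ 2 /\
    g0 * (a1 - g0) * (a2 - g0) * J m g0 = b0 + b1 * g0 + b2 * g0 ^ 2 /\
    g1 * (a1 - g1) * (a2 - g1) * J m g1 = b0 + b1 * g1 + b2 * g1 ^ 2 /\
    g2 * (a1 - g2) * (a2 - g2) * J m g2 = b0 + b1 * g2 + b2 * g2 ^ 2.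
Proof.
  intros Hm Ha1 Ha2 b2.
  assert (Hc : 0 < 4 * m ^ 2) by nra.
  assert (HK : 0 < / (16 * PI ^ 2)) by (apply Rinv_0_lt_compat; pose proof PI_RGT_0; nra).
  set (c := 4 * m ^ 2) in *; set (K := / (16 * PI ^ 2)) in *.
  set (H := cubic_J K c a1 a2).
  assert (HJ : forall g, g < c -> g * (a1 - g) * (a2 - g) * J m g = H g)
    by (intros g Hg; unfold H, cubic_J, cubic; rewrite J_eq_reduced; auto).
  destruct (divdiff2_cubic_J_neg_inf K c a1 a2 HK Hc b2) as (T & HT & Hlow).
  destruct (divdiff2_cubic_J_near_c K c a1 a2 HK Hc Ha1 Ha2 b2)
    as (x1 & y1 & z1 & Hxy1 & Hyz1 & Hzc1 & Hhigh).
  destruct (divdiff2_IVT H c b2 (- T) 0 (c / 2) x1 y1 z1 (cubic_J_continuity K c a1 a2 Hc)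
              ltac:(lra) ltac:(lra) ltac:(lra) Hxy1 Hyz1 Hzc1 (conj Hlow Hhigh))
    as (x & y & z & Hxy & Hyz & Hzc & Hdd).
  destruct (quadratic_interpolation H x y z Hxy Hyz) as (b0 & b1 & Hx & Hy & Hz).
  rewrite Hdd in Hx, Hy, Hz.
  exists b0, b1, x, y, z.
  repeat split; try lra; rewrite HJ by lra; assumption.
Qed.
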